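(* Let $C\in\mathbb{R}^{n\times n}$ be symmetric, $\rho>0$, and let $(\tilde\sigma^k,\sigma^k,y^k)$ be generated by the ADMM-BM algorithm described in the context, with Assumption A holding. Then for all $k\ge2$, $L_\rho(\tilde\sigma^k,\sigma^k,y^k)\ge -n\|C\|_\infty$.
   Context: $\langle A,B\rangle=\mathrm{Tr}(A^\top B)$, $\|\cdot\|_F$ Frobenius norm, $\|C\|_\infty=\max_i\sum_j|C_{ij}|$. For $\sigma\in\mathbb{R}^{n\times r}$, $\sigma_i$ is its $i$-th row; $\mathcal{M}=\{\sigma\in\mathbb{R}^{n\times r}:\|\sigma_i\|=1\ \forall i\}$. ADMM-BM with parameter $\rho$: choose $\tilde\sigma^0\in\mathcal{M}$, $\sigma^0=\tilde\sigma^0$, $y^0=C\tilde\sigma^0$. For $k=0,1,\dots$: $\gamma^k=\sigma^k-\frac1\rho(y^k+C\sigma^k)$ with rows $\gamma_i^k$; $\tilde\sigma^{k+1}_i=\gamma_i^k/\|\gamma_i^k\|$; $\sigma^{k+1}=\tilde\sigma^{k+1}+\frac1\rho(y^k-C\tilde\sigma^{k+1})$; $y^{k+1}=y^k+\rho(\tilde\sigma^{k+1}-\sigma^{k+1})$. Assumption A: $\gamma_i^k\neq0$ for all $i,k$. $L_\rho(\tilde\sigma,\sigma,y)=\langle C,\tilde\sigma\sigma^\top\rangle+\langle y,\tilde\sigma-\sigma\rangle+\frac\rho2\|\tilde\sigma-\sigma\|_F^2+\sum_i\mathcal{I}_{\{\|u\|=1\}}(\tilde\sigma_i)$, $\mathcal{I}_S$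 the indicator function of $S$. *)

From HB Require Import structures.
From mathcomp Require Import all_boot all_order all_algebra.
From mathcomp Require Import reals constructive_ereal.
Set Implicit Arguments. Unset Strict Implicit. Unset Printing Implicit Defensive.
Import Order.TTheory GRing.Theory Num.Theory.
Local Open Scope ring_scope.

Section Defs.
Variable R : realType.

Definition rownorm (n r : nat) (s : 'M[R]_(n, r)) (i : 'I_n) : R :=
  Num.sqrt (\sum_(j < r) s i j ^+ 2).

Definition onM (n r : nat) (s : 'M[R]_(n, r)) : Prop :=
  forall i : 'I_n, rownorm s i = 1.

Definition frob_inner (m p : nat) (A B : 'M[R]_(m, p)) : R := \tr (A^T *m B).

Definition frob_sq (m p : nat) (A : 'M[R]_(m, p)) : R :=
  \sum_(i < m) \sum_(j < p) A i j ^+ 2.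

Definition norm_inf (n : nat) (C : 'M[R]_n) : R :=
  \big[Num.max/0]_(i < n) \sum_(j < n) `|C i j|.

Definition rownormalize (n r : nat) (g : 'M[R]_(n, r)) : 'M[R]_(n, r) :=
  \matrix_(i, j) (g i j / rownorm g i).

Definition admm_gamma (n r : nat) (C : 'M[R]_n) (rho : R)
  (sigma y : 'M[R]_(n, r)) : 'M[R]_(n, r) :=
  sigma - rho^-1 *: (y + C *m sigma).

Definition ADMM_BM (n r : nat) (C : 'M[R]_n) (rho : R)
  (st sigma y : nat -> 'M[R]_(n, r)) : Prop :=
  [/\ onM (st 0%N), sigma 0%N = st 0%N, y 0%N = C *m st 0%N &
   forall k : nat,
     [/\ st k.+1 = rownormalize (admm_gamma C rho (sigma k) (y k)),
         sigma k.+1 = st k.+1 + rho^-1 *: (y k - C *m st k.+1) &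
         y k.+1 = y k + rho *: (st k.+1 - sigma k.+1)]].

Definition assumptionA (n r : nat) (C : 'M[R]_n) (rho : R)
  (sigma y : nat -> 'M[R]_(n, r)) : Prop :=
  forall (k : nat) (i : 'I_n), row i (admm_gamma C rho (sigma k) (y k)) != 0.

Definition ind_sphere (r : nat) (u : 'rV[R]_r) : \bar R :=
  if Num.sqrt (\sum_(j < r) u ord0 j ^+ 2) == 1 then 0%E else (+oo)%E.

Definition L_rho (n r : nat) (C : 'M[R]_n) (rho : R)
  (st sigma y : 'M[R]_(n, r)) : \bar R :=
  ((frob_inner C (st *m sigma^T) + frob_inner y (st - sigma)
    + rho / 2 * frob_sq (st - sigma))%:E
   + \sum_(i < n) ind_sphere (row i st))%E.

End Defs.

(* Once k >= 1, the multiplier update y^k = y^(k-1) + rho (st^k - sigma^k)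
   together with the definition of sigma^k gives y^k = C st^k.  Substituting
   this into L_rho and using the symmetry of C, the linear terms collapse to
   <C st^k, st^k>, the penalty term is nonnegative and the indicators vanish
   because Assumption A makes every row of st^k a unit vector.  Finally
   <C st, st> = sum_(i,j) C_ij <st_i, st_j> with |<st_i, st_j>| <= 1, so it is
   at least - sum_i sum_j |C_ij| >= - n ||C||_oo. *)
From HB Require Import structures.
From mathcomp Require Import all_boot all_order all_algebra.
From mathcomp Require Import reals constructive_ereal.
From mathcomp Require Import lra.
Set Implicit Arguments. Unset Strict Implicit. Unset Printing Implicit Defensive.
Import Order.TTheory GRing.Theory Num.Theory.
Local Open Scope ring_scope.

Section Frobenius.
Variable R : realType.
Implicit Types m p q : nat.

Lemma frob_innerE m p (A B : 'M[R]_(m, p)) :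
  frob_inner A B = \sum_(i < m) \sum_(j < p) A i j * B i j.
Proof.
rewrite /frob_inner /mxtrace exchange_big /=.
by apply: eq_bigr => j _; rewrite mxE; apply: eq_bigr => i _; rewrite mxE.
Qed.

Lemma frob_innerC m p (A B : 'M[R]_(m, p)) : frob_inner A B = frob_inner B A.
Proof.
by rewrite !frob_innerE; apply: eq_bigr => i _; apply: eq_bigr => j _; rewrite mulrC.
Qed.

Lemma frob_innerBr m p (A B D : 'M[R]_(m, p)) :
  frob_inner A (B - D) = frob_inner A B - frob_inner A D.
Proof. by rewrite /frob_inner mulmxBr linearB. Qed.

Lemma frob_inner_mulmxl m p q (C : 'M[R]_(m, p)) (A : 'M[R]_(p, q)) B :
  frob_inner (C *m A) B = frob_inner A (C^T *m B).
Proof. by rewrite /frob_inner trmx_mul mulmxA. Qed.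

Lemma frob_inner_mulmx_tr m p q (A : 'M[R]_(m, p)) (B : 'M[R]_(m, q))
    (D : 'M[R]_(p, q)) :
  frob_inner A (B *m D^T) = frob_inner (A *m D) B.
Proof. by rewrite /frob_inner mulmxA mxtrace_mulC trmx_mul mulmxA. Qed.

Lemma frob_sq_ge0 m p (A : 'M[R]_(m, p)) : 0 <= frob_sq A.
Proof. by apply: sumr_ge0 => i _; apply: sumr_ge0 => j _; apply: sqr_ge0. Qed.

End Frobenius.

Section UnitRows.
Variable R : realType.

Lemma rownorm_rownormalize n r (g : 'M[R]_(n, r)) i :
  row i g != 0 -> rownorm (rownormalize g) i = 1.
Proof.
move=> gi_neq0; set ss := \sum_(j < r) g i j ^+ 2.
have ss_ge0 : 0 <= ss by apply: sumr_ge0 => j _; apply: sqr_ge0.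
have ss_neq0 : ss != 0.
  apply: contra gi_neq0 => /eqP ss0; apply/eqP/rowP => j.
  have /eqP := @psumr_eq0P _ _ _ _ (fun j _ => sqr_ge0 (g i j)) ss0 j isT.
  by rewrite sqrf_eq0 !mxE => /eqP.
rewrite {1}/rownorm.
have -> : \sum_(j < r) rownormalize g i j ^+ 2 = ss / rownorm g i ^+ 2.
  by rewrite big_distrl; apply: eq_bigr => j _; rewrite mxE expr_div_n.
by rewrite /rownorm -/ss sqr_sqrtr // mulfV // sqrtr1.
Qed.

Lemma rownorm_eq1 n r (s : 'M[R]_(n, r)) i :
  rownorm s i = 1 -> \sum_(j < r) s i j ^+ 2 = 1.
Proof.
move=> si1; rewrite -[RHS](expr1n _ 2) -si1 sqr_sqrtr //.
by apply: sumr_ge0 => j _; apply: sqr_ge0.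
Qed.

Lemma sum_ind_sphere_onM n r (s : 'M[R]_(n, r)) :
  onM s -> (\sum_(i < n) ind_sphere (row i s) = 0)%E.
Proof.
move=> s_onM; apply: big1 => i _; rewrite /ind_sphere.
under eq_bigr => j _ do rewrite mxE.
by rewrite -/(rownorm s i) s_onM eqxx.
Qed.

(* AM-GM termwise: |a_j b_j| <= (a_j^2 + b_j^2) / 2. *)
Lemma unit_dot_le1 r (a b : 'I_r -> R) :
  \sum_j a j ^+ 2 = 1 -> \sum_j b j ^+ 2 = 1 -> `|\sum_j a j * b j| <= 1.
Proof.
move=> a1 b1; apply: le_trans (ler_norm_sum _ _ _) _.
apply: (@le_trans _ _ (\sum_j (a j ^+ 2 + b j ^+ 2) / 2)); last first.
  by rewrite -big_distrl big_split /= a1 b1; lra.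
apply: ler_sum => j _; rewrite normrM.
rewrite -(real_normK (num_real (a j))) -(real_normK (num_real (b j))).
have := sqr_ge0 (`|a j| - `|b j|); move: `|a j| `|b j| => u v; nra.
Qed.

Lemma row_abs_sum_le_norm_inf n (C : 'M[R]_n) i :
  \sum_(j < n) `|C i j| <= norm_inf C.
Proof. exact: (le_bigmax _ (fun i => \sum_(j < n) `|C i j|)). Qed.

Lemma frob_inner_mulmx_onM_ge n r (C : 'M[R]_n) (s : 'M[R]_(n, r)) :
  onM s -> - (n%:R * norm_inf C) <= frob_inner (C *m s) s.
Proof.
move=> s_onM.
have -> : frob_inner (C *m s) s =
    \sum_(i < n) \sum_(l < n) C i l * \sum_(j < r) s l j * s i j.
  rewrite frob_innerE; apply: eq_bigr => i _.
  under eq_bigr => j _ do rewrite mxE big_distrl /=.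
  rewrite exchange_big; apply: eq_bigr => l _.
  by rewrite big_distrr; apply: eq_bigr => j _; rewrite /= mulrA.
rewrite mulr_natl -mulNrn -[X in _ *+ X]card_ord -sumr_const.
apply: ler_sum => i _.
apply: (@le_trans _ _ (- \sum_(l < n) `|C i l|)).
  by rewrite lerN2 row_abs_sum_le_norm_inf.
rewrite -sumrN; apply: ler_sum => l _.
have dot_le1 := unit_dot_le1 (rownorm_eq1 (s_onM l)) (rownorm_eq1 (s_onM i)).
have : `|C i l * \sum_(j < r) s l j * s i j| <= `|C i l|.
  by rewrite normrM ler_piMr.
by rewrite ler_norml => /andP[].
Qed.

End UnitRows.

Section ADMM.
Variables (R : realType) (n r : nat) (C : 'M[R]_n) (rho : R).
Variables (st sigma y : nat -> 'M[R]_(n, r)).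
Hypothesis admm : ADMM_BM C rho st sigma y.

Lemma ADMM_BM_multiplier (rho_neq0 : rho != 0) k : y k.+1 = C *m st k.+1.
Proof.
have [_ _ _ /(_ k) [_ -> ->]] := admm.
rewrite opprD addrA subrr add0r scalerN scalerA mulfV // scale1r.
by rewrite opprB addrCA subrr addr0.
Qed.

Lemma ADMM_BM_onM : assumptionA C rho sigma y -> forall k, onM (st k.+1).
Proof.
have [_ _ _ step] := admm; move=> hypA k i.
by have [-> _ _] := step k; apply: rownorm_rownormalize.
Qed.

End ADMM.

Lemma L_rho_multiplier_Cst (R : realType) n r (C : 'M[R]_n) (rho : R)
    (st sigma : 'M[R]_(n, r)) :
  C^T = C -> onM st ->
  L_rho C rho st sigma (C *m st) =
    (frob_inner (C *m st) st + rho / 2 * frob_sq (st - sigma))%:E.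
Proof.
move=> C_sym st_onM; rewrite /L_rho sum_ind_sphere_onM // adde0.
rewrite frob_inner_mulmx_tr frob_inner_mulmxl C_sym frob_innerC.
by rewrite frob_innerBr addrCA subrr addr0.
Qed.

Theorem lemma4 (R : realType) (n r : nat) (C : 'M[R]_n) (rho : R)
  (st sigma y : nat -> 'M[R]_(n, r)) :
  C^T = C -> 0 < rho ->
  ADMM_BM C rho st sigma y ->
  assumptionA C rho sigma y ->
  forall k : nat, (2 <= k)%N ->
    (((- (n%:R * norm_inf C))%:E) <= L_rho C rho (st k) (sigma k) (y k))%E.
Proof.
move=> C_sym rho_gt0 admm hypA [//|k] _.
have st_onM := ADMM_BM_onM admm hypA k.
rewrite (ADMM_BM_multiplier admm (lt0r_neq0 rho_gt0)) L_rho_multiplier_Cst //.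
rewrite lee_fin ler_wpDr ?frob_inner_mulmx_onM_ge //.
by apply: mulr_ge0 (frob_sq_ge0 _); rewrite divr_ge0 ?ltW.
Qed.
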